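(* If $\mathfrak{U}$ is a commutative pseudo-amenable Banach algebra, then $\mathfrak{U}$ is symmetrically pseudo-amenable.
   Context: For a Banach algebra $\mathfrak{U}$, $\mathfrak{U}\widehat{\otimes}\mathfrak{U}$ is the projective tensor product, with $a(b\otimes c)=ab\otimes c$, $(b\otimes c)a=b\otimes ca$, and $\pi(b\otimes c)=bc$ (extended linearly and continuously). The flip is $(b\otimes c)^{\circ}=c\otimes b$; $\mathbf{t}$ is symmetric if $\mathbf{t}^\circ=\mathbf{t}$. An approximate diagonal is a net $\{\mathbf{t}_\lambda\}$ in $\mathfrak{U}\widehat{\otimes}\mathfrak{U}$ (not necessarily bounded) with $a\mathbf{t}_\lambda-\mathbf{t}_\lambda a\to0$ and $\pi(\mathbf{t}_\lambda)a\to a$ for all $a\in\mathfrak{U}$. $\mathfrak{U}$ is pseudo-amenable if it has an approximate diagonal, and symmetrically pseudo-amenable if it has an approximate diagonal consisting of symmetric elements. *)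

From mathcomp Require Import all_boot all_algebra.
From mathcomp Require Import all_classical all_reals all_analysis.
From mathcomp Require Export complex.
Import numFieldNormedType.Exports.
Import GRing.Theory Num.Theory.

Set Implicit Arguments.
Unset Strict Implicit.
Unset Printing Implicit Defensive.

Local Open Scope ring_scope.
Local Open Scope complex_scope.

Section BanachAlgebra.
Variables (R : realType) (U : completeNormedModType R[i]).

Definition banach_algebra (mul : U -> U -> U) : Prop :=
  [/\ (forall a b c, mul a (mul b c) = mul (mul a b) c),
      (forall a b c, mul (a + b) c = mul a c + mul b c),
      (forall a b c, mul a (b + c) = mul a b + mul a c),
      (forall (k : R[i]) a b, mul (k *: a) b = k *: mul a b) &
      ((forall (k : R[i]) a b, mul a (k *: b) = k *: mul a b) /\
       (forall a b, `|mul a b| <= `|a| * `|b|))].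

Definition commutative_alg (mul : U -> U -> U) : Prop :=
  forall a b, mul a b = mul b a.

(* A finite tensor sum_i a_i (x) b_i is represented by the list of pairs. *)
Definition bilinear_form (B : U -> U -> R[i]) : Prop :=
  [/\ (forall a b c, B (a + b) c = B a c + B b c),
      (forall a b c, B a (b + c) = B a b + B a c),
      (forall (k : R[i]) a b, B (k *: a) b = k * B a b) &
      (forall (k : R[i]) a b, B a (k *: b) = k * B a b)].

(* Two lists represent the same element of the algebraic tensor product
   iff every bilinear form (universal property) takes the same value. *)
Definition tens_eq (s t : seq (U * U)) : Prop :=
  forall B, bilinear_form B ->
    \sum_(p <- s) B p.1 p.2 = \sum_(p <- t) B p.1 p.2.

Definition tens_cost (t : seq (U * U)) : R[i] :=
  \sum_(p <- t) (`|p.1| * `|p.2|).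

(* projective norm of the finite tensor s is < eps:
   ||s||_pi = inf { sum ||c_j|| ||d_j|| : sum c_j (x) d_j = s } < eps *)
Definition projnorm_lt (s : seq (U * U)) (eps : R[i]) : Prop :=
  exists t, tens_eq s t /\ tens_cost t < eps.

Definition tens_opp (s : seq (U * U)) : seq (U * U) :=
  [seq (- p.1, p.2) | p <- s].

(* An element of U (^x) U is represented by a series sum_n u_n.1 (x) u_n.2
   with sum_n ||u_n.1|| ||u_n.2|| < oo. *)
Definition ptensor (u : nat -> U * U) : Prop :=
  exists M : R[i], forall N,
    \sum_(n < N) (`|(u n).1| * `|(u n).2|) <= M.

Definition partial (u : nat -> U * U) (N : nat) : seq (U * U) :=
  [seq u n | n <- iota 0 N].

(* ||u - v||_pi < eps in U (^x) U (the norm of the completion is the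
   limit of the projective norms of the partial sums). *)
Definition pdist_lt (u v : nat -> U * U) (eps : R[i]) : Prop :=
  exists N0, forall N, (N0 <= N)%N ->
    projnorm_lt (partial u N ++ tens_opp (partial v N)) eps.

Definition lact (mul : U -> U -> U) (a : U) (u : nat -> U * U) :=
  fun n => (mul a (u n).1, (u n).2).
Definition ract (mul : U -> U -> U) (u : nat -> U * U) (a : U) :=
  fun n => ((u n).1, mul (u n).2 a).
Definition flip (u : nat -> U * U) := fun n => ((u n).2, (u n).1).
Definition tens_pi (mul : U -> U -> U) (u : nat -> U * U) : U :=
  limn (series (fun n => mul (u n).1 (u n).2)).

Definition symmetric_tensor (u : nat -> U * U) : Prop :=
  forall eps : R[i], 0 < eps -> pdist_lt u (flip u) eps.

Definition directed_set (I : Type) (le : I -> I -> Prop) : Prop :=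
  [/\ inhabited I, (forall i, le i i),
      (forall i j k, le i j -> le j k -> le i k) &
      (forall i j, exists k, le i k /\ le j k)].

Definition approx_diagonal (mul : U -> U -> U) (I : Type)
    (le : I -> I -> Prop) (t : I -> nat -> U * U) : Prop :=
  [/\ (forall i, ptensor (t i)),
      (forall a (eps : R[i]), 0 < eps -> exists i0, forall i, le i0 i ->
          pdist_lt (lact mul a (t i)) (ract mul (t i) a) eps) &
      (forall a (eps : R[i]), 0 < eps -> exists i0, forall i, le i0 i ->
          `|mul (tens_pi mul (t i)) a - a| < eps)].

Definition pseudo_amenable (mul : U -> U -> U) : Prop :=
  exists (I : Type) (le : I -> I -> Prop) (t : I -> nat -> U * U),
    directed_set le /\ approx_diagonal mul le t.

Definition sym_pseudo_amenable (mul : U -> U -> U) : Prop :=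
  exists (I : Type) (le : I -> I -> Prop) (t : I -> nat -> U * U),
    [/\ directed_set le, approx_diagonal mul le t &
        forall i, symmetric_tensor (t i)].

End BanachAlgebra.

From mathcomp Require Import all_boot all_algebra.
From mathcomp Require Import all_classical all_reals all_analysis.
From mathcomp Require Import complex.
From mathcomp Require Import ring.
Import numFieldNormedType.Exports.
Import order.Order.TTheory GRing.Theory Num.Theory.

Set Implicit Arguments.
Unset Strict Implicit.
Unset Printing Implicit Defensive.

Local Open Scope ring_scope.
Local Open Scope complex_scope.
Local Open Scope classical_set_scope.

(* If (t_l) is an approximate diagonal of a commutative algebra, so is its
   symmetrization s_l = (t_l + t_l°)/2.  For t = sum_n a_n (x) b_n, s is the
   series interleaving (a_n/2) (x) b_n and b_n (x) (a_n/2): its partial sums of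
   even length are symmetrizations of partial sums of t, and those of odd
   length differ from them by one term, which tends to 0.  So s is symmetric,
   and pi(s) = pi(t) by commutativity.  Commutativity also turns the flip of
   a t - t a into -(a t° - t° a), whence
   a s - s a = (a t - t a)/2 - (a t - t a)°/2, a tensor of projective norm at
   most that of a t - t a. *)

Lemma sum_iota_double (V : nmodType) (g : nat -> V) (K : nat) :
  \sum_(n <- iota 0 K.*2) g n = \sum_(k <- iota 0 K) (g k.*2 + g k.*2.+1).
Proof.
elim: K => [|K IH]; first by rewrite double0 /= !big_nil.
rewrite doubleS -(addn2 K.*2) -(addn1 K) !iotaD !big_cat IH /= !big_cons.
by rewrite !big_nil !add0n !addr0 addrA.
Qed.

Lemma cvgn_even_odd (T : topologicalType) (x : nat -> T) (l : T) :
  (fun k => x k.*2) @ \oo --> l -> (fun k => x k.*2.+1) @ \oo --> l ->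
  x @ \oo --> l.
Proof.
move=> x_even x_odd A lA.
have [N1 _ HN1] := x_even A lA; have [N2 _ HN2] := x_odd A lA.
exists (maxn N1 N2).*2 => // n le_n.
have le_half : (maxn N1 N2 <= n./2)%N by rewrite -(doubleK (maxn _ _)) half_leq.
rewrite -(odd_double_half n); case: odd; [apply: HN2 | apply: HN1];
  by apply: leq_trans le_half; rewrite ?leq_maxl ?leq_maxr.
Qed.

Lemma ge0_complex_Re (R : realType) (z : R[i]) : 0 <= z -> z = (complex.Re z)%:C.
Proof. by case: z => a b /ger0_Im /= ->. Qed.

Lemma nneg_bounded_sum_tail (R : realType) (c : nat -> R[i]) (M : R[i]) :
    (forall n, 0 <= c n) -> (forall N, \sum_(0 <= n < N) c n <= M) ->
  forall e, 0 < e -> exists N0, forall N K, (N0 <= N)%N -> \sum_(N <= n < K) c n < e.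
Proof.
move=> c_ge0 c_le e e_gt0.
(* R[i] is only partially ordered: monotone convergence is used on real parts. *)
pose r n := complex.Re (c n).
have sumE m n : \sum_(m <= k < n) c k = (\sum_(m <= k < n) r k)%:C.
  by rewrite rmorph_sum; apply: eq_bigr => k _; exact: ge0_complex_Re.
have r_ge0 n : 0 <= r n by rewrite -ler0c -(ge0_complex_Re (c_ge0 n)).
have r_cvg : cvgn (series r).
  apply: nondecreasing_is_cvgn; first exact: nondecreasing_series.
  exists (complex.Re M) => _ [N _ <-].
  by have := c_le N; rewrite sumE lecE => /andP[].
have e_Re : e = (complex.Re e)%:C := ge0_complex_Re (ltW e_gt0).
rewrite e_Re ltcR in e_gt0 *.
have /cauchy_cvgP/cauchy_seriesP/(_ _ e_gt0) := r_cvg.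
case=> -[A B] /= [[NA _ HA] [NB _ HB]] tail.
exists (maxn NA NB) => N K le_N; rewrite sumE ltcR.
have [le_NK|/ltnW le_KN] := leqP N K; last by rewrite big_geq.
apply: le_lt_trans (ler_norm _) (tail (N, K) _).
split; [apply: HA | apply: HB] => /=.
  exact: leq_trans (leq_maxl _ _) le_N.
exact: leq_trans (leq_maxr _ _) (leq_trans le_N le_NK).
Qed.

Lemma mulV2D (F : numFieldType) (x : F) : 2^-1 * x + 2^-1 * x = x.
Proof. by rewrite -mulrDl -[2^-1]mul1r -splitr mul1r. Qed.

Lemma scaleV2D (F : numFieldType) (V : lmodType F) (v : V) :
  2^-1 *: v + 2^-1 *: v = v.
Proof. by have := mulV2D (1 : F); rewrite !mulr1 -scalerDl => ->; rewrite scale1r. Qed.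

Notation tens_eval B s := (\sum_(p <- s) B p.1 p.2).

Section ProjectiveTensors.
Variables (R : realType) (U : completeNormedModType R[i]).
Implicit Types (s t : seq (U * U)) (u v : nat -> U * U) (B : U -> U -> R[i]).

Definition tens_scale (k : R[i]) s := [seq (k *: p.1, p.2) | p <- s].

Definition tens_flip s := [seq (p.2, p.1) | p <- s].

Definition tens_diff u v N := partial u N ++ tens_opp (partial v N).

Definition term_cost u n : R[i] := `|(u n).1| * `|(u n).2|.

Lemma term_cost_ge0 u n : 0 <= term_cost u n.
Proof. by rewrite mulr_ge0. Qed.

Lemma tens_eval_cat B s t : tens_eval B (s ++ t) = tens_eval B s + tens_eval B t.
Proof. exact: big_cat. Qed.

Lemma tens_eval_flip B s : tens_eval B (tens_flip s) = tens_eval (fun x y => B y x) s.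
Proof. exact: big_map. Qed.

Lemma partialS u N : partial u N.+1 = rcons (partial u N) (u N).
Proof. by rewrite /partial -addn1 iotaD map_cat cats1. Qed.

Lemma bilinear_flip B : bilinear_form B -> bilinear_form (fun x y => B y x).
Proof. by case. Qed.

Section Bilinear.
Variables (B : U -> U -> R[i]) (B_bilin : bilinear_form B).

Lemma bilinZl k x y : B (k *: x) y = k * B x y.
Proof. by case: B_bilin. Qed.

Lemma bilinZr k x y : B x (k *: y) = k * B x y.
Proof. by case: B_bilin. Qed.

Lemma bilinNl x y : B (- x) y = - B x y.
Proof. by rewrite -scaleN1r bilinZl mulN1r. Qed.

Lemma bilinNr x y : B x (- y) = - B x y.
Proof. by rewrite -scaleN1r bilinZr mulN1r. Qed.

Lemma tens_eval_opp s : tens_eval B (tens_opp s) = - tens_eval B s.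
Proof. by rewrite big_map -sumrN; apply: eq_bigr => p _; rewrite bilinNl. Qed.

Lemma tens_eval_scale k s : tens_eval B (tens_scale k s) = k * tens_eval B s.
Proof. by rewrite big_map mulr_sumr; apply: eq_bigr => p _; rewrite bilinZl. Qed.

End Bilinear.

Lemma tens_eq_diffS u v N :
  tens_eq (tens_diff u v N.+1) (tens_diff u v N ++ [:: u N; (- (v N).1, (v N).2)]).
Proof.
move=> B _; rewrite /tens_diff /tens_opp !partialS map_rcons -!cats1 !big_cat /=.
by rewrite !big_cons !big_nil !addr0 addrACA.
Qed.

Lemma tens_cost_lt s e : tens_cost s < e -> projnorm_lt s e.
Proof. by exists s. Qed.

Lemma projnorm_lt_nil (e : R[i]) : 0 < e -> projnorm_lt ([::] : seq (U * U)) e.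
Proof. by move=> e_gt0; apply: tens_cost_lt; rewrite /tens_cost big_nil. Qed.

Lemma projnorm_lt_tens_eq s s' e : tens_eq s s' -> projnorm_lt s' e -> projnorm_lt s e.
Proof.
by move=> ss' [t [s't t_cost]]; exists t; split=> // B B_bilin; rewrite ss' ?s't.
Qed.

Lemma projnorm_lt_le s e e' : e <= e' -> projnorm_lt s e -> projnorm_lt s e'.
Proof. by move=> le_ee' [t [st t_cost]]; exists t; split=> //; apply: lt_le_trans le_ee'. Qed.

Lemma projnorm_lt_cat s s' e e' :
  projnorm_lt s e -> projnorm_lt s' e' -> projnorm_lt (s ++ s') (e + e').
Proof.
move=> [t [st t_cost]] [t' [s't' t'_cost]]; exists (t ++ t'); split.
  by move=> B B_bilin; rewrite !tens_eval_cat; congr (_ + _); [exact: st | exact: s't'].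
by rewrite /tens_cost big_cat ltrD.
Qed.

Lemma projnorm_lt_opp s e : projnorm_lt s e -> projnorm_lt (tens_opp s) e.
Proof.
move=> [t [st t_cost]]; exists (tens_opp t); split.
  by move=> B B_bilin; rewrite !tens_eval_opp //; congr (- _); exact: st.
by rewrite /tens_cost big_map; under eq_bigr do rewrite normrN.
Qed.

Lemma projnorm_lt_flip s e : projnorm_lt s e -> projnorm_lt (tens_flip s) e.
Proof.
move=> [t [st t_cost]]; exists (tens_flip t); split.
  by move=> B B_bilin; rewrite !tens_eval_flip; exact: (st _ (bilinear_flip B_bilin)).
by rewrite /tens_cost big_map; under eq_bigr do rewrite mulrC.
Qed.

Lemma projnorm_lt_scale k s e :
  k != 0 -> projnorm_lt s e -> projnorm_lt (tens_scale k s) (`|k| * e).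
Proof.
move=> k_neq0 [t [st t_cost]]; exists (tens_scale k t); split.
  by move=> B B_bilin; rewrite !tens_eval_scale //; congr (_ * _); exact: st.
rewrite /tens_cost big_map.
by under eq_bigr do rewrite normrZ -mulrA; rewrite -mulr_sumr ltr_pM2l ?normr_gt0.
Qed.

Lemma pdist_lt_even u v (e1 e2 : R[i]) K0 N0 :
    (forall K, (K0 <= K)%N -> projnorm_lt (tens_diff u v K.*2) e1) ->
    (forall n, (N0 <= n)%N -> term_cost u n + term_cost v n < e2) ->
  pdist_lt u v (e1 + e2).
Proof.
move=> diff_even cost_lt.
have e2_gt0 : 0 < e2.
  by apply: le_lt_trans (cost_lt N0 (leqnn _)); rewrite addr_ge0 ?term_cost_ge0.
exists (maxn K0.*2 N0.+1) => N; rewrite geq_max => /andP[le_K0 le_N0].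
have le_half : (K0 <= N./2)%N by rewrite -(doubleK K0) half_leq.
move: le_N0; have := odd_double_half N; set K := N./2.
case: (odd N) => <- le_N0; rewrite ?add1n ?add0n in le_N0 *.
- apply: projnorm_lt_tens_eq (tens_eq_diffS _ _ _) _.
  apply: projnorm_lt_cat; first exact: diff_even.
  apply: tens_cost_lt; rewrite /tens_cost !big_cons big_nil addr0 /= normrN.
  exact: cost_lt.
- by apply: projnorm_lt_le (diff_even K le_half); rewrite lerDl ltW.
Qed.

Lemma ptensor_tail u (e : R[i]) : ptensor u -> 0 < e ->
  exists N0, forall N K, (N0 <= N)%N -> \sum_(N <= n < K) term_cost u n < e.
Proof.
move=> [M u_bounded]; apply: (nneg_bounded_sum_tail (term_cost_ge0 u)) => N.
by rewrite big_mkord; exact: u_bounded.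
Qed.

Lemma ptensor_term_cost_small u (e : R[i]) : ptensor u -> 0 < e ->
  exists N0, forall n, (N0 <= n)%N -> term_cost u n < e.
Proof.
move=> u_pt /(ptensor_tail u_pt) [N0 tail].
by exists N0 => n /(tail n n.+1); rewrite big_nat1.
Qed.

Definition symmetrize u : nat -> U * U := fun n =>
  if odd n then ((u n./2).2, 2^-1 *: (u n./2).1)
  else (2^-1 *: (u n./2).1, (u n./2).2).

Lemma symmetrize_even u k : symmetrize u k.*2 = (2^-1 *: (u k).1, (u k).2).
Proof. by rewrite /symmetrize odd_double doubleK. Qed.

Lemma symmetrize_odd u k : symmetrize u k.*2.+1 = ((u k).2, 2^-1 *: (u k).1).
Proof. by rewrite /symmetrize /= odd_double uphalf_double. Qed.

Lemma term_cost_symmetrize u n :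
  term_cost (symmetrize u) n = 2^-1 * term_cost u n./2.
Proof.
rewrite /symmetrize /term_cost; case: odd => /=;
  by rewrite normrZ ger0_norm ?invr_ge0 ?ler0n //; ring.
Qed.

Lemma term_cost_flip u n : term_cost (flip u) n = term_cost u n.
Proof. exact: mulrC. Qed.

Lemma ptensor_symmetrize u : ptensor u -> ptensor (symmetrize u).
Proof.
move=> [M u_bounded]; exists M => N; apply: le_trans (u_bounded N).
rewrite -!/(term_cost _ _) -(big_mkord xpredT (term_cost _)).
rewrite -(big_mkord xpredT (term_cost u)) /index_iota subn0.
apply: (@le_trans _ _ (\sum_(n <- iota 0 N.*2) term_cost (symmetrize u) n)).
  have le_N2N : (N <= N.*2)%N by rewrite -addnn leq_addr.
  rewrite -(subnKC le_N2N) iotaD big_cat lerDl.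
  by rewrite sumr_ge0 // => n _; exact: term_cost_ge0.
rewrite sum_iota_double [X in X <= _](eq_bigr (term_cost u)) // => k _.
by rewrite !term_cost_symmetrize /= doubleK uphalf_double mulV2D.
Qed.

Lemma tens_eq_diff_symmetrize_flip u K :
  tens_eq (tens_diff (symmetrize u) (flip (symmetrize u)) K.*2) [::].
Proof.
move=> B B_bilin; rewrite /tens_diff /tens_opp /partial big_cat !big_map big_nil.
rewrite /= !sum_iota_double -big_split big1 // => k _.
rewrite /flip /= symmetrize_even symmetrize_odd /= !(bilinNl B_bilin).
by rewrite -opprD [X in - X]addrC subrr.
Qed.

Lemma symmetric_symmetrize u : ptensor u -> symmetric_tensor (symmetrize u).
Proof.
move=> u_pt eps eps_gt0; rewrite [eps]splitr.
have eps2_gt0 : 0 < eps / 2 by rewrite divr_gt0.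
have [N0 u_small] := ptensor_term_cost_small u_pt eps2_gt0.
apply: (pdist_lt_even (K0 := 0) (N0 := N0.*2)) => [K _ | n le_n].
  apply: projnorm_lt_tens_eq (tens_eq_diff_symmetrize_flip _ _) _.
  exact: projnorm_lt_nil.
rewrite term_cost_flip term_cost_symmetrize mulV2D; apply: u_small.
by rewrite -(doubleK N0) half_leq.
Qed.

End ProjectiveTensors.

Section CommutativeBanachAlgebra.
Variables (R : realType) (U : completeNormedModType R[i]) (mul : U -> U -> U).
Hypothesis mulP : banach_algebra mul.
Hypothesis mulC : commutative_alg mul.
Implicit Types (u : nat -> U * U) (a : U).

Lemma mul_scalel k x y : mul (k *: x) y = k *: mul x y.
Proof. by case: mulP. Qed.

Lemma mul_scaler k x y : mul x (k *: y) = k *: mul x y.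
Proof. by case: mulP => _ _ _ _ []. Qed.

Lemma norm_mul_le x y : `|mul x y| <= `|x| * `|y|.
Proof. by case: mulP => _ _ _ _ []. Qed.

Lemma term_cost_lact a u n : term_cost (lact mul a u) n <= `|a| * term_cost u n.
Proof. by rewrite /term_cost mulrA ler_wpM2r ?norm_mul_le. Qed.

Lemma term_cost_ract a u n : term_cost (ract mul u a) n <= `|a| * term_cost u n.
Proof.
by rewrite /term_cost mulrCA ler_wpM2l // (le_trans (norm_mul_le _ _)) // mulrC.
Qed.

Lemma tens_eq_diff_symmetrize a u K :
  let D := tens_diff (lact mul a u) (ract mul u a) K in
  tens_eq (tens_diff (lact mul a (symmetrize u)) (ract mul (symmetrize u) a) K.*2)
          (tens_scale 2^-1 D ++ tens_opp (tens_scale 2^-1 (tens_flip D))).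
Proof.
move=> D B B_bilin; rewrite {}/D /tens_diff /tens_scale /tens_flip /tens_opp.
rewrite !map_cat !big_cat !big_map /partial ?big_map /= !sum_iota_double.
rewrite -!big_split; apply: eq_bigr => k _ /=.
rewrite symmetrize_even symmetrize_odd /= mul_scaler mul_scalel.
rewrite !(bilinZl B_bilin, bilinZr B_bilin, bilinNl B_bilin, bilinNr B_bilin).
by rewrite (mulC a (u k).2) (mulC (u k).1 a); ring.
Qed.

Lemma pdist_lt_symmetrize a u (eps : R[i]) : ptensor u -> 0 < eps ->
    pdist_lt (lact mul a u) (ract mul u a) (eps / 2) ->
  pdist_lt (lact mul a (symmetrize u)) (ract mul (symmetrize u) a) eps.
Proof.
move=> u_pt eps_gt0 [K0 D_small]; rewrite [eps]splitr.
have eps2_gt0 : 0 < eps / 2 by rewrite divr_gt0.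
have a1_gt0 : 0 < `|a| + 1 by rewrite ltr_wpDl.
have [N0 u_small] := ptensor_term_cost_small u_pt (divr_gt0 eps2_gt0 a1_gt0).
apply: (pdist_lt_even (K0 := K0) (N0 := N0.*2)) => [K le_K | n le_n].
  apply: projnorm_lt_tens_eq (tens_eq_diff_symmetrize _ _ _) _.
  have half_norm : `|2^-1 : R[i]| = 2^-1 by rewrite ger0_norm // invr_ge0 ler0n.
  apply: (@projnorm_lt_le _ _ _ (`|2^-1| * (eps / 2) + `|2^-1| * (eps / 2))).
    by rewrite half_norm mulV2D.
  apply: projnorm_lt_cat; last apply: projnorm_lt_opp;
    apply: projnorm_lt_scale; rewrite ?invr_eq0 ?pnatr_eq0 //;
    [|apply: projnorm_lt_flip]; exact: D_small.
apply: le_lt_trans (lerD (term_cost_lact _ _ _) (term_cost_ract _ _ _)) _.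
rewrite term_cost_symmetrize mulrCA mulV2D.
apply: le_lt_trans (_ : _ <= (`|a| + 1) * term_cost u n./2) _.
  by rewrite ler_wpM2r ?term_cost_ge0 ?lerDl.
rewrite mulrC -ltr_pdivlMr //; apply: u_small.
by rewrite -(doubleK N0) half_leq.
Qed.

Lemma ptensor_series_cvg u : ptensor u -> cvgn (series (fun n => mul (u n).1 (u n).2)).
Proof.
move=> u_pt; apply/cauchy_cvgP/cauchy_seriesP => e /(ptensor_tail u_pt) [N0 tail].
exists ([set n | (N0 <= n)%N], setT) => [|[m n] [/= le_m _]]; first by split; exists N0.
apply: le_lt_trans (ler_norm_sum _ _ _) (le_lt_trans _ (tail m n le_m)).
by apply: ler_sum => k _; exact: norm_mul_le.
Qed.

Lemma tens_pi_symmetrize u : ptensor u -> tens_pi mul (symmetrize u) = tens_pi mul u.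
Proof.
move=> u_pt; pose w k := mul (u k).1 (u k).2.
pose p n := mul (symmetrize u n).1 (symmetrize u n).2.
have p_even k : p k.*2 = 2^-1 *: w k by rewrite /p symmetrize_even mul_scalel.
have p_odd k : p k.*2.+1 = 2^-1 *: w k by rewrite /p symmetrize_odd mul_scaler mulC.
have series_even k : series p k.*2 = series w k.
  rewrite /series /= /index_iota !subn0 sum_iota_double.
  by apply: eq_bigr => j _; rewrite p_even p_odd scaleV2D.
have series_odd k : series p k.*2.+1 = series w k + 2^-1 *: w k.
  by rewrite -series_even -p_even /series /= big_nat_recr.
rewrite /tens_pi; apply: cvg_lim => //; apply: cvgn_even_odd.
  by rewrite (_ : (fun k => _) = series w); [exact: ptensor_series_cvg | apply/funext].
rewrite (_ : (fun k => _) = series w \+ (fun k => 2^-1 *: w k)); last first.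
  by apply/funext => k; rewrite series_odd.
rewrite -[X in _ --> X]addr0; apply: cvgD; first exact: ptensor_series_cvg.
rewrite -(scaler0 _ 2^-1); apply: cvgZr; exact: cvg_series_cvg_0 (ptensor_series_cvg _).
Qed.

End CommutativeBanachAlgebra.

Theorem corollary3p3 (R : realType) (U : completeNormedModType R[i])
    (mul : U -> U -> U) :
  banach_algebra mul -> commutative_alg mul -> pseudo_amenable mul ->
  sym_pseudo_amenable mul.
Proof.
move=> mulP mulC [I [le [t [le_directed [t_ptensor t_comm t_unit]]]]].
exists I, le, (fun i => symmetrize (t i)); split=> //; last first.
  by move=> i; exact: symmetric_symmetrize.
split=> [i | a eps eps_gt0 | a eps eps_gt0]; first exact: ptensor_symmetrize.
  have [i0 t_comm_i0] := t_comm a (eps / 2) (divr_gt0 eps_gt0 (ltr0Sn _ 1)).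
  by exists i0 => i /t_comm_i0; exact: pdist_lt_symmetrize.
have [i0 t_unit_i0] := t_unit a eps eps_gt0.
by exists i0 => i /t_unit_i0; rewrite tens_pi_symmetrize.
Qed.
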